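(* For every $\alpha>0$ there exist $c<\infty$ and $u>0$ such that for all positive integers $i,j,k$, \[\sum_{\pi\in\mathrm{seq}_k(i,j,0)}\prod_{l=1}^k e^{-\alpha K_l}\le c\,e^{-uk^2}.\]
   Context: A legal sequence of length $k$ is a sequence of triples $\pi=[(i_0,j_0,0),(i_1,j_1,R_1),\dots,(i_k,j_k,R_k)]$ with $i_l,j_l\in\{1,2,3,\dots\}$, $R_l\in\{0,1\}$, such that for $0\le l\le k-1$: if $R_{l+1}=0$ then $i_{l+1}\ge i_l+1$ and $j_l\le j_{l+1}\le j_l+1$; if $R_{l+1}=1$ then $i_l\le i_{l+1}\le i_l+1$ and $j_{l+1}\ge j_l+1$. $\mathrm{seq}_k(i,j,0)$ is the set of legal sequences of length $k$ with $(i_k,j_k,R_k)=(i,j,0)$. For $1\le l\le k$, $K_l=i_{l-1}$ if $R_l=0$ and $K_l=j_{l-1}$ if $R_l=1$. *)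

From Stdlib Require Import Reals List Arith.
Import ListNotations.
Open Scope R_scope.

(* A triple (i, j, R) with R : bool (false = 0, true = 1). *)
Definition triple := (nat * nat * bool)%type.

Definition legal_step (a b : triple) : Prop :=
  let '(i, j, _) := a in
  let '(i', j', r') := b in
  if r' then (i <= i' <= i + 1)%nat /\ (j + 1 <= j')%nat
  else (i + 1 <= i')%nat /\ (j <= j' <= j + 1)%nat.

Fixpoint legal_chain (p : list triple) : Prop :=
  match p with
  | a :: ((b :: _) as t) => legal_step a b /\ legal_chain t
  | _ => True
  end.

Definition legal_seq (k : nat) (p : list triple) : Prop :=
  length p = S k /\
  Forall (fun t => let '(i, j, _) := t in (1 <= i)%nat /\ (1 <= j)%nat) p /\
  (exists i0 j0 rest, p = (i0, j0, false) :: rest) /\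
  legal_chain p.

Definition in_seqk (k i j : nat) (p : list triple) : Prop :=
  legal_seq k p /\ last p (0%nat, 0%nat, true) = (i, j, false).

Definition K_step (a b : triple) : nat :=
  let '(i, j, _) := a in
  let '(_, _, r') := b in
  if r' then j else i.

Fixpoint seq_weight (alpha : R) (p : list triple) : R :=
  match p with
  | a :: ((b :: _) as t) => exp (- alpha * INR (K_step a b)) * seq_weight alpha t
  | _ => 1
  end.

Definition sumR (l : list R) : R := fold_right Rplus 0 l.

From Stdlib Require Import Reals List Lia Lra.
Import ListNotations.
Open Scope R_scope.

(* The weight of a sequence is exp(-alpha * sum of its K_l).  Along a legal
   sequence the K-values of the steps with R = 0 are strictly increasing
   i-coordinates, and those with R = 1 strictly increasing j-coordinates, so
   the sum of the K_l is at least k^2/4.  Half of the exponent therefore gives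
   the Gaussian factor exp(-alpha k^2/8); the other half is summed over all
   sequences ending at (i,j,0) by peeling off the last step: the possible
   predecessors of a triple carry K-values 1, 2, 3, ... with multiplicity at
   most 4, so each step contributes a geometric factor C = 4/(1 - e^(-alpha/2))
   and the total is at most C^k.  Finally C^k e^(-alpha k^2/8) <= c e^(-alpha k^2/16)
   by completing the square. *)

Lemma exp_le_compat x y : x <= y -> exp x <= exp y.
Proof.
  intros [Hlt | ->]; [left; apply exp_increasing, Hlt | right; reflexivity].
Qed.

Lemma exp_opp_lt_1 b : 0 < b -> exp (- b) < 1.
Proof. intros Hb; rewrite <- exp_0; apply exp_increasing; lra. Qed.

Lemma sumR_app l1 l2 : sumR (l1 ++ l2) = sumR l1 + sumR l2.
Proof. induction l1 as [|x l IH]; simpl; [| rewrite IH]; lra. Qed.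

Lemma sumR_map_le {A} (f g : A -> R) l :
  (forall x, In x l -> f x <= g x) -> sumR (map f l) <= sumR (map g l).
Proof.
  induction l as [|x l IH]; simpl; intros Hfg; [lra|].
  pose proof (Hfg x (or_introl eq_refl)).
  assert (sumR (map f l) <= sumR (map g l)) by (apply IH; auto).
  lra.
Qed.

Lemma sumR_map_mult_l {A} c (f : A -> R) l :
  sumR (map (fun x => c * f x) l) = c * sumR (map f l).
Proof. induction l as [|x l IH]; simpl; [| rewrite IH]; ring. Qed.

Lemma sumR_map_nonneg {A} (f : A -> R) l :
  (forall x, 0 <= f x) -> 0 <= sumR (map f l).
Proof. intros Hf; induction l as [|x l IH]; simpl; [| pose proof (Hf x)]; lra. Qed.

Lemma sumR_flat_map {A B} (f : B -> R) (F : A -> list B) l :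
  sumR (map f (flat_map F l)) = sumR (map (fun a => sumR (map f (F a))) l).
Proof.
  induction l as [|a l IH]; simpl; [| rewrite map_app, sumR_app, IH]; reflexivity.
Qed.

Lemma sumR_NoDup_incl_le {A} (f : A -> R) S T :
  (forall x, 0 <= f x) -> NoDup S -> incl S T ->
  sumR (map f S) <= sumR (map f T).
Proof.
  intros Hf HS; revert T; induction HS as [|x S HxS HS IH]; intros T Hincl.
  - apply sumR_map_nonneg, Hf.
  - destruct (in_split x T (Hincl x (or_introl eq_refl))) as (T1 & T2 & ->).
    assert (Hrest : incl S (T1 ++ T2)).
    { intros y Hy.
      destruct (in_app_or _ _ _ (Hincl y (or_intror Hy))) as [H | [<- | H]];
        [apply in_or_app; auto | contradiction | apply in_or_app; auto]. }
    specialize (IH _ Hrest).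
    rewrite map_app, sumR_app in *; simpl; lra.
Qed.

Lemma sumR_geometric b : 0 < b -> forall N m,
  sumR (map (fun n => exp (- b * INR n)) (seq m N))
  <= exp (- b * INR m) / (1 - exp (- b)).
Proof.
  intros Hb; pose proof (exp_opp_lt_1 b Hb); pose proof (exp_pos (- b)).
  induction N as [|N IH]; intros m; simpl.
  - apply Rlt_le, Rdiv_lt_0_compat; [apply exp_pos | lra].
  - specialize (IH (S m)).
    rewrite S_INR, Rmult_plus_distr_l, Rmult_1_r, exp_plus in IH.
    set (E := exp (- b * INR m)) in *; set (q := exp (- b)) in *.
    assert (E + E * q / (1 - q) = E / (1 - q)) by (field; lra).
    lra.
Qed.

Lemma mult_sub_sqr_le a L x : 0 < a -> x * L - a * x ^ 2 <= L ^ 2 / (4 * a).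
Proof.
  intros Ha.
  assert (L ^ 2 / (4 * a) - (x * L - a * x ^ 2) = (2 * a * x - L) ^ 2 / (4 * a))
    by (field; lra).
  assert (0 <= (2 * a * x - L) ^ 2 / (4 * a))
    by (apply Rle_mult_inv_pos; [apply pow2_ge_0 | lra]).
  lra.
Qed.

Fixpoint sumK (p : list triple) : nat :=
  match p with
  | a :: ((b :: _) as t) => (K_step a b + sumK t)%nat
  | _ => 0%nat
  end.

Lemma seq_weight_exp alpha p : seq_weight alpha p = exp (- alpha * INR (sumK p)).
Proof.
  induction p as [|a t IH]; simpl; [|destruct t as [|b t]];
    try (rewrite Rmult_0_r, exp_0; reflexivity).
  rewrite IH, plus_INR, <- exp_plus; f_equal; ring.
Qed.

Definition coords_pos (t : triple) : Prop :=
  let '(i, j, _) := t in (1 <= i)%nat /\ (1 <= j)%nat.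

(* a and b count the steps with R = 0 and with R = 1. *)
Lemma sumK_lower_bound k : forall i0 j0 r0 p,
  legal_chain ((i0, j0, r0) :: p) -> length p = k ->
  exists a b, (a + b = k)%nat /\
    (a * (2 * i0 + a) + b * (2 * j0 + b) <= 2 * sumK ((i0, j0, r0) :: p) + a + b)%nat.
Proof.
  induction k as [|k IH]; intros i0 j0 r0 p Hc Hl.
  - destruct p; [|discriminate]. exists 0%nat, 0%nat; simpl; lia.
  - destruct p as [|[[i1 j1] r1] p]; [discriminate|].
    destruct Hc as [Hs Hc]; simpl in Hl.
    destruct (IH i1 j1 r1 p Hc ltac:(lia)) as (a & b & Hab & Hbound).
    change (sumK ((i0, j0, r0) :: (i1, j1, r1) :: p))
      with (K_step (i0, j0, r0) (i1, j1, r1) + sumK ((i1, j1, r1) :: p))%nat.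
    set (s := sumK ((i1, j1, r1) :: p)) in *.
    destruct r1; simpl in Hs |- *.
    + exists a, (S b); split; [lia|].
      assert (a * i0 <= a * i1)%nat by nia.
      assert (b * (j0 + 1) <= b * j1)%nat by nia.
      nia.
    + exists (S a), b; split; [lia|].
      assert (a * (i0 + 1) <= a * i1)%nat by nia.
      assert (b * j0 <= b * j1)%nat by nia.
      nia.
Qed.

Lemma sumK_ge_sqr k p :
  legal_chain p -> Forall coords_pos p -> length p = S k -> (k * k <= 4 * sumK p)%nat.
Proof.
  intros Hc Hpos Hl.
  destruct p as [|[[i0 j0] r0] p]; [discriminate|].
  destruct (Forall_inv Hpos) as [Hi0 Hj0]; simpl in Hl; injection Hl as Hl.
  destruct (sumK_lower_bound k i0 j0 r0 p Hc Hl) as (a & b & <- & Hbound).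
  set (s := sumK _) in *.
  assert (a <= a * i0)%nat by nia.
  assert (b <= b * j0)%nat by nia.
  assert (2 * (a * b) <= a * a + b * b)%nat.
  { destruct (Nat.le_ge_cases a b) as [Hab | Hab];
      destruct (Nat.le_exists_sub _ _ Hab) as (c & -> & _); nia. }
  nia.
Qed.

Lemma seq_weight_le_gauss alpha k p :
  0 <= alpha -> legal_chain p -> Forall coords_pos p -> length p = S k ->
  seq_weight alpha p <= exp (- alpha * INR k ^ 2 / 8) * seq_weight (alpha / 2) p.
Proof.
  intros Ha Hc Hpos Hl.
  pose proof (le_INR _ _ (sumK_ge_sqr k p Hc Hpos Hl)) as Hsq.
  rewrite !mult_INR in Hsq; simpl (INR 4) in Hsq.
  rewrite !seq_weight_exp, <- exp_plus; apply exp_le_compat.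
  simpl; nra.
Qed.

Lemma seq_weight_snoc b q x e :
  seq_weight b (q ++ [x; e]) = seq_weight b (q ++ [x]) * exp (- b * INR (K_step x e)).
Proof.
  induction q as [|y [|z q] IH]; simpl in *; try ring.
  rewrite IH; ring.
Qed.

Lemma legal_chain_snoc q x e :
  legal_chain (q ++ [x; e]) <-> legal_chain (q ++ [x]) /\ legal_step x e.
Proof.
  induction q as [|y [|z q] IH]; simpl in *; tauto.
Qed.

(* All candidate predecessors of e; with truncated subtraction it may also list
   a few non-legal triples, which is harmless for an upper bound. *)
Definition preds (e : triple) : list triple :=
  let '(i, j, r) := e in
  if r then flat_map (fun n => [(i, n, false); (i, n, true); (i - 1, n, false); (i - 1, n, true)]%nat)
              (seq 1 (j - 1)%nat)
  else flat_map (fun n => [(n, j, false); (n, j, true); (n, j - 1, false); (n, j - 1, true)]%nat)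
              (seq 1 (i - 1)%nat).

Lemma In_preds a e : legal_step a e -> coords_pos a -> In a (preds e).
Proof.
  destruct a as [[x y] r], e as [[i j] []]; intros Hs Hpos; simpl in Hs, Hpos;
    apply in_flat_map.
  - exists y; split; [apply in_seq; lia|].
    assert (x = i \/ x = i - 1)%nat as [-> | ->] by lia; destruct r; simpl; tauto.
  - exists x; split; [apply in_seq; lia|].
    assert (y = j \/ y = j - 1)%nat as [-> | ->] by lia; destruct r; simpl; tauto.
Qed.

Definition branch_bound (b : R) : R := 4 / (1 - exp (- b)).

Lemma branch_bound_pos b : 0 < b -> 0 < branch_bound b.
Proof.
  intros Hb; pose proof (exp_opp_lt_1 b Hb).
  apply Rdiv_lt_0_compat; lra.
Qed.

Lemma sumR_preds_le b e : 0 < b ->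
  sumR (map (fun a => exp (- b * INR (K_step a e))) (preds e)) <= branch_bound b.
Proof.
  intros Hb; pose proof (exp_opp_lt_1 b Hb); pose proof (exp_pos (- b)).
  assert (Hgeom : forall N,
    sumR (map (fun n => 4 * exp (- b * INR n)) (seq 1 N)) <= branch_bound b).
  { intros N; rewrite sumR_map_mult_l.
    pose proof (sumR_geometric b Hb N 1) as Hg; rewrite Rmult_1_r in Hg.
    unfold branch_bound, Rdiv in *.
    assert (exp (- b) * / (1 - exp (- b)) <= / (1 - exp (- b))).
    { rewrite <- (Rmult_1_l (/ (1 - exp (- b)))) at 2.
      apply Rmult_le_compat_r; [apply Rlt_le, Rinv_0_lt_compat |]; lra. }
    lra. }
  destruct e as [[i j] []]; unfold preds; rewrite sumR_flat_map;
    (eapply Rle_trans; [| apply Hgeom]); right; f_equal;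
    apply map_ext; intros n; simpl; ring.
Qed.

Fixpoint chains (k : nat) (e : triple) : list (list triple) :=
  match k with
  | O => [[e]]
  | S k => flat_map (fun a => map (fun q => q ++ [e]) (chains k a)) (preds e)
  end.

Lemma chains_snoc k e q : In q (chains k e) -> exists q', q = q' ++ [e].
Proof.
  destruct k as [|k]; simpl.
  - intros [<- | []]; exists []; reflexivity.
  - intros Hq; apply in_flat_map in Hq as (a & _ & Hq).
    apply in_map_iff in Hq as (q' & <- & _); eauto.
Qed.

Lemma sumR_chains_le b k e : 0 < b ->
  sumR (map (seq_weight b) (chains k e)) <= branch_bound b ^ k.
Proof.
  intros Hb; revert e; induction k as [|k IH]; intros e; simpl.
  - lra.
  - rewrite sumR_flat_map.
    apply Rle_trans with
      (sumR (map (fun a => branch_bound b ^ k * exp (- b * INR (K_step a e))) (preds e))).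
    + apply sumR_map_le; intros a _.
      rewrite map_map.
      rewrite (map_ext_in _ (fun q => exp (- b * INR (K_step a e)) * seq_weight b q)).
      * rewrite sumR_map_mult_l, Rmult_comm.
        apply Rmult_le_compat_r; [apply Rlt_le, exp_pos | apply IH].
      * intros q Hq; destruct (chains_snoc k a q Hq) as (q' & ->).
        rewrite <- app_assoc; simpl; rewrite seq_weight_snoc; ring.
    + rewrite sumR_map_mult_l, Rmult_comm.
      apply Rmult_le_compat_r; [| apply sumR_preds_le, Hb].
      apply pow_le, Rlt_le, branch_bound_pos, Hb.
Qed.

Lemma In_chains k : forall e p d,
  length p = S k -> legal_chain p -> Forall coords_pos p -> last p d = e ->
  In p (chains k e).
Proof.
  induction k as [|k IH]; intros e p d Hl Hc Hpos He.
  - destruct p as [|x [|y p]]; try discriminate.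
    simpl in He; subst; simpl; auto.
  - destruct (exists_last (l := p)) as (q & x & ->); [intros ->; discriminate|].
    rewrite last_last in He; subst x.
    rewrite length_app in Hl; simpl in Hl.
    destruct (exists_last (l := q)) as (q' & a & ->); [intros ->; simpl in Hl; lia|].
    rewrite <- app_assoc in Hc, Hpos; simpl in Hc, Hpos.
    apply legal_chain_snoc in Hc as [Hc Hs].
    apply Forall_app in Hpos as [Hpos' Hae].
    assert (Hpos : Forall coords_pos (q' ++ [a])) by (apply Forall_app; inversion Hae; auto).
    apply in_flat_map; exists a; split.
    + apply In_preds; [exact Hs | inversion Hae; auto].
    + apply in_map_iff; exists (q' ++ [a]); split; [reflexivity|].
      apply (IH a _ d); auto.
      * rewrite length_app in Hl |- *; simpl in *; lia.
      * apply last_last.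
Qed.

Theorem lemma4p17 :
  forall alpha : R, 0 < alpha ->
  exists c u : R, 0 < u /\
    forall (i j k : nat), (1 <= i)%nat -> (1 <= j)%nat -> (1 <= k)%nat ->
    forall S : list (list triple),
      NoDup S -> Forall (in_seqk k i j) S ->
      sumR (map (seq_weight alpha) S) <= c * exp (- u * INR k ^ 2).
Proof.
  intros alpha Ha.
  set (b := alpha / 2); assert (Hb : 0 < b) by (unfold b; lra).
  set (L := ln (branch_bound b)).
  exists (exp (4 * L ^ 2 / alpha)), (alpha / 16); split; [lra|].
  intros i j k _ _ _ S HS Hseq; rewrite Forall_forall in Hseq.
  set (G := exp (- alpha * INR k ^ 2 / 8)).
  apply Rle_trans with (G * sumR (map (seq_weight b) S)).
  { rewrite <- sumR_map_mult_l; apply sumR_map_le; intros p Hp.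
    destruct (Hseq p Hp) as [(Hl & Hpos & _ & Hc) _].
    apply seq_weight_le_gauss; auto; lra. }
  apply Rle_trans with (G * branch_bound b ^ k).
  { apply Rmult_le_compat_l; [apply Rlt_le, exp_pos|].
    apply Rle_trans with (sumR (map (seq_weight b) (chains k (i, j, false))));
      [| apply sumR_chains_le, Hb].
    apply sumR_NoDup_incl_le; [| exact HS |].
    - intros p; rewrite seq_weight_exp; apply Rlt_le, exp_pos.
    - intros p Hp; destruct (Hseq p Hp) as [(Hl & Hpos & _ & Hc) He].
      exact (In_chains k _ p _ Hl Hc Hpos He). }
  unfold G; rewrite <- (Rpower_pow k _ (branch_bound_pos b Hb)); unfold Rpower; fold L.
  rewrite <- exp_plus, <- exp_plus; apply exp_le_compat.
  pose proof (mult_sub_sqr_le (alpha / 16) L (INR k) ltac:(lra)) as Hsq.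
  replace (L ^ 2 / (4 * (alpha / 16))) with (4 * L ^ 2 / alpha) in Hsq by (field; lra).
  lra.
Qed.
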